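(* Let $D$ be an arc-colored digraph of order $n\geq 4$ containing no rainbow triangle, and let $v\in V(D)$ be such that $D-v\cong\overleftrightarrow{K}_{n-1}$ and $d^{s}(v)\geq 3$. Then $CN^{-}(v)\cap C^{s}(v)=\emptyset$ or $CN^{+}(v)\cap C^{s}(v)=\emptyset$. Moreover, if in addition $D\cong\overleftrightarrow{K}_4$, then $c(D)\leq 5$.
   Context: All digraphs are finite, without loops or multiple arcs (opposite arcs allowed); $\overleftrightarrow{K}_{m}$ is the complete digraph on $m$ vertices. An arc-coloring is any map $C:A(D)\to\mathbb{N}$; $c(D)$ is the number of colors used. A rainbow triangle is a directed 3-cycle with pairwise distinct arc colors. $CN^{-}(v)$ (resp. $CN^{+}(v)$) is the set of colors on the arcs entering (resp. leaving) $v$. A color $c\in C(D)$ is saturated by $v$ if every arc of color $c$ is incident to $v$; $C^{s}(v)$ is the set of colors saturated by $v$ and $d^{s}(v)=|C^{s}(v)|$. *)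

From mathcomp Require Import all_boot.
Set Implicit Arguments. Unset Strict Implicit. Unset Printing Implicit Defensive.

(* A digraph is a finite vertex type V with an arc relation A : rel V
   (required irreflexive = no loops; a relation gives no multiple arcs,
   opposite arcs allowed).  An arc-colouring is C : V -> V -> nat, only
   its values on arcs matter. *)

Section Defs.
Variables (V : finType) (A : rel V) (C : V -> V -> nat).

Definition arcs : seq (V * V) := [seq p <- enum [set: V * V] | A p.1 p.2].

Definition colors : seq nat := undup [seq C p.1 p.2 | p <- arcs].

Definition num_colors : nat := size colors.

Definition rainbow_triangle (u v w : V) : bool :=
  [&& A u v, A v w, A w u,
      C u v != C v w, C v w != C w u & C w u != C u v].

Definition no_rainbow_triangle : Prop :=
  forall u v w : V, ~~ rainbow_triangle u v w.

Definition CNin (v : V) : seq nat := [seq C x v | x <- enum V & A x v].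
Definition CNout (v : V) : seq nat := [seq C v x | x <- enum V & A v x].

Definition saturated (v : V) (c : nat) : bool :=
  (c \in colors) &&
  all (fun p : V * V => (p.1 == v) || (p.2 == v))
      [seq p <- arcs | C p.1 p.2 == c].

Definition Cs (v : V) : seq nat := [seq c <- colors | saturated v c].
Definition ds (v : V) : nat := size (Cs v).

Definition complete_minus (v : V) : Prop :=
  forall x y : V, x != v -> y != v -> x != y -> A x y.

Definition complete_digraph : Prop :=
  forall x y : V, x != y -> A x y.

End Defs.

From mathcomp Require Import all_boot.
Set Implicit Arguments.
Unset Strict Implicit.
Unset Printing Implicit Defensive.

(* A colour saturated by v lies only on arcs at v.  So in a triangle
   x -> v -> y -> x whose arcs at v carry saturated colours, the arc y -> x has
   an unsaturated colour and the two saturated ones must coincide.  Hence if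
   distinct saturated colours a, b entered v at x and left v at y, then x = y
   and every saturated colour would be a or b, contradicting d^s(v) >= 3; a
   saturated colour both entering and leaving v yields such a pair together
   with any other saturated colour.  In K4 with, say, no saturated colour
   entering v, the three out-colours of v are exactly the saturated colours,
   each arc p -> q avoiding v gets the colour of q -> v, and the triangle on
   the three other vertices merges two of the three in-colours of v: at most
   5 colours. *)

Section Colors.
Variables (V : finType) (A : rel V) (C : V -> V -> nat).

Lemma mem_arcs p : (p \in arcs A) = A p.1 p.2.
Proof. by rewrite mem_filter mem_enum in_setT andbT. Qed.

Lemma colorsP c :
  reflect (exists2 p : V * V, A p.1 p.2 & c = C p.1 p.2) (c \in colors A C).
Proof.
by rewrite mem_undup; apply: (iffP mapP) => -[p]; rewrite ?mem_arcs; exists p;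
  rewrite ?mem_arcs.
Qed.

Lemma num_colors_le (s : seq nat) :
  (forall p q, A p q -> C p q \in s) -> num_colors A C <= size s.
Proof.
move=> As; apply: uniq_leq_size; first exact: undup_uniq.
by move=> c /colorsP [[p q] /As Apq ->].
Qed.

Lemma triangle_eq u w x :
  no_rainbow_triangle A C -> A u w -> A w x -> A x u ->
  C u w != C w x -> C x u != C u w -> C w x = C x u.
Proof.
move=> nr Auw Awx Axu n1 n2; apply/eqP; apply: contraNT (nr u w x) => n3.
by rewrite /rainbow_triangle Auw Awx Axu n1 n3 n2.
Qed.

Lemma no_rainbow_triangle_rev :
  no_rainbow_triangle A C ->
  no_rainbow_triangle (fun x y => A y x) (fun x y => C y x).
Proof.
move=> nr u w x; apply: contra (nr x w u); rewrite /rainbow_triangle.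
case/and4P => Awu Axw Aux /and3P [n1 n2 n3].
rewrite Axw Awu Aux (eq_sym (C x w)) n1 (eq_sym (C w u)) n3.
by rewrite (eq_sym (C u x)) n2.
Qed.

Variables (v : V) (irr : irreflexive A).

Lemma CNinP c : reflect (exists2 x, A x v & c = C x v) (c \in CNin A C v).
Proof.
apply: (iffP mapP) => -[x].
  by rewrite mem_filter => /andP [Axv _] ->; exists x.
by move=> Axv ->; exists x; rewrite // mem_filter Axv mem_enum.
Qed.

Lemma CNoutP c : reflect (exists2 x, A v x & c = C v x) (c \in CNout A C v).
Proof.
apply: (iffP mapP) => -[x].
  by rewrite mem_filter => /andP [Avx _] ->; exists x.
by move=> Avx ->; exists x; rewrite // mem_filter Avx mem_enum.
Qed.

Lemma size_CNin_le : size (CNin A C v) <= #|V|.-1.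
Proof.
rewrite size_map -(cardC1 v) cardE.
apply: uniq_leq_size; first by rewrite filter_uniq ?enum_uniq.
move=> x; rewrite mem_filter mem_enum !inE => /andP [Axv _].
by apply: contraTneq Axv => ->; rewrite irr.
Qed.

Lemma size_CNout_le : size (CNout A C v) <= #|V|.-1.
Proof.
rewrite size_map -(cardC1 v) cardE.
apply: uniq_leq_size; first by rewrite filter_uniq ?enum_uniq.
move=> x; rewrite mem_filter mem_enum !inE => /andP [Avx _].
by apply: contraTneq Avx => ->; rewrite irr.
Qed.

Lemma Cs_uniq : uniq (Cs A C v).
Proof. by rewrite filter_uniq ?undup_uniq. Qed.

Lemma Cs_at_v c : c \in Cs A C v -> c \in CNin A C v \/ c \in CNout A C v.
Proof.
rewrite mem_filter => /andP [/andP [/colorsP [[p q] /= Apq ->] /allP inc] _].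
have := inc (p, q); rewrite mem_filter /= eqxx mem_arcs => /(_ Apq).
case/orP => /eqP Ev; rewrite Ev in Apq *.
  by right; apply/CNoutP; exists q.
by left; apply/CNinP; exists p.
Qed.

Lemma Cs_inner p q : A p q -> p != v -> q != v -> C p q \notin Cs A C v.
Proof.
move=> Apq pv qv; rewrite mem_filter.
apply/negP => /andP [/andP [_ /allP inc] _].
have := inc (p, q); rewrite mem_filter /= eqxx mem_arcs Apq.
by rewrite (negbTE pv) (negbTE qv) => /(_ isT).
Qed.

Lemma CNout_sub_Cs :
  #|V|.-1 <= ds A C v -> ~~ has (fun c => c \in Cs A C v) (CNin A C v) ->
  {subset CNout A C v <= Cs A C v}.
Proof.
move=> big /hasPn in_free c; have Cs_out : {subset Cs A C v <= CNout A C v}.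
  move=> d Cs_d; case: (Cs_at_v Cs_d) => // /in_free; by rewrite Cs_d.
have sz : size (CNout A C v) <= size (Cs A C v).
  exact: leq_trans size_CNout_le big.
by rewrite -(uniq_min_size Cs_uniq Cs_out sz).2.
Qed.

Lemma CNin_sub_Cs :
  #|V|.-1 <= ds A C v -> ~~ has (fun c => c \in Cs A C v) (CNout A C v) ->
  {subset CNin A C v <= Cs A C v}.
Proof.
move=> big /hasPn out_free c; have Cs_in : {subset Cs A C v <= CNin A C v}.
  move=> d Cs_d; case: (Cs_at_v Cs_d) => // /out_free; by rewrite Cs_d.
have sz : size (CNin A C v) <= size (Cs A C v).
  exact: leq_trans size_CNin_le big.
by rewrite -(uniq_min_size Cs_uniq Cs_in sz).2.
Qed.

Hypotheses (nr : no_rainbow_triangle A C) (cm : complete_minus A v).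

Lemma Cs_in_out_eq_apart x y :
  x != y -> A x v -> A v y -> C x v \in Cs A C v -> C v y \in Cs A C v ->
  C x v = C v y.
Proof.
move=> xy Axv Avy Cs_in Cs_out.
have xv : x != v by apply: contraTneq Axv => ->; rewrite irr.
have yv : y != v by apply: contraTneq Avy => ->; rewrite irr.
have Ayx : A y x by apply: cm; rewrite // eq_sym.
have Cs_yx := Cs_inner Ayx yv xv.
apply: triangle_eq nr Ayx Axv Avy _ _.
  by apply: contraNneq Cs_yx => ->.
by apply: contraNneq Cs_yx => <-.
Qed.

Lemma Cs_in_out_eq x y :
  3 <= ds A C v -> A x v -> A v y -> C x v \in Cs A C v -> C v y \in Cs A C v ->
  C x v = C v y.
Proof.
move=> big Axv Avy Cs_in Cs_out; apply: contraTeq big => ab; rewrite -ltnNge.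
have yx : y = x.
  by apply: contraNeq ab => yx; apply/eqP/Cs_in_out_eq_apart; rewrite // eq_sym.
have Cs_pair : {subset Cs A C v <= [:: C x v; C v y]}.
  move=> r Cs_r; rewrite !inE.
  case: (Cs_at_v Cs_r) => [/CNinP | /CNoutP] [z Az Er]; subst r.
    case: (eqVneq z y) => [-> | zy]; first by rewrite yx eqxx.
    by rewrite (Cs_in_out_eq_apart zy Az Avy Cs_r Cs_out) eqxx orbT.
  case: (eqVneq x z) => [<- | xz]; first by rewrite -yx eqxx orbT.
  by rewrite (Cs_in_out_eq_apart xz Axv Az Cs_in Cs_r) eqxx.
exact: uniq_leq_size Cs_uniq Cs_pair.
Qed.

Lemma Cs_CNin_or_CNout :
  3 <= ds A C v ->
  ~~ has (fun c => c \in Cs A C v) (CNin A C v) \/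
  ~~ has (fun c => c \in Cs A C v) (CNout A C v).
Proof.
move=> big; case: (boolP (has _ (CNin A C v))); last by left.
case/hasP => _ /CNinP [x Axv ->] Cs_a; right.
apply/hasP => -[_ /CNoutP [y Avy ->] Cs_b].
have ab := Cs_in_out_eq big Axv Avy Cs_a Cs_b.
have [c Cs_c ca] : exists2 c, c \in Cs A C v & c != C x v.
  apply/hasP; apply: contraTT big => /hasPn all_a; rewrite -ltnNge.
  apply: (@leq_ltn_trans 1) => //; rewrite /ds.
  apply: (@uniq_leq_size _ _ [:: C x v]) Cs_uniq _ => c /all_a.
  by rewrite inE negbK.
case: (Cs_at_v Cs_c) => [/CNinP | /CNoutP] [z Az Ec]; subst c.
  by rewrite (Cs_in_out_eq big Az Avy Cs_c Cs_b) -ab eqxx in ca.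
by rewrite -(Cs_in_out_eq big Axv Az Cs_a Cs_c) eqxx in ca.
Qed.

End Colors.

Lemma enum_predC1_card4 (V : finType) (v : V) :
  #|V| = 4 -> exists x y z, enum (predC1 v) = [:: x; y; z].
Proof.
move=> V4; have : size (enum (predC1 v)) = 3 by rewrite -cardE cardC1 V4.
by case: (enum _) => [|x [|y [|z []]]] // _; exists x, y, z.
Qed.

(* [P] stands for the saturated colours; it is abstract so that the lemma also
   applies to the reversed digraph. *)
Lemma K4_arc_colors_five (V : finType) (A : rel V) (C : V -> V -> nat)
    (P : pred nat) (v : V) :
  irreflexive A -> complete_digraph A -> #|V| = 4 -> no_rainbow_triangle A C ->
  (forall q, q != v -> P (C v q)) ->
  (forall p q, p != v -> p != q -> ~~ P (C p q)) ->
  exists2 s : seq nat, size s <= 5 & forall p q, A p q -> C p q \in s.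
Proof.
move=> irr cd V4 nr outP restP.
have [x [y [z others]]] := enum_predC1_card4 v V4.
have mem_others w : (w != v) = (w \in [:: x; y; z]) by rewrite -others mem_enum.
have := enum_uniq (predC1 v); rewrite others /= !inE !negb_or.
case/and3P => /andP [xy xz] yz _.
have inner p q : p != v -> q != v -> p != q -> C p q = C q v.
  move=> pv qv pq; apply: triangle_eq nr (cd v p _) (cd p q pq) (cd q v qv) _ _.
  - by rewrite eq_sym.
  - by apply: contraNneq (restP p q pv pq) => <-; apply: outP.
  - by apply: contraNneq (restP q v qv qv) => ->; apply: outP.
have [xv yv zv] : [/\ x != v, y != v & z != v].
  by rewrite !mem_others !inE !eqxx !orbT.
exists (undup ([seq C v w | w <- [:: x; y; z]] ++
               [seq C w v | w <- [:: x; y; z]])).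
  rewrite -ltnS ltn_size_undup cat_uniq; apply/negP => /and3P [_ _]; apply/negP.
  have zx : z != x by rewrite eq_sym.
  have := nr x y z; rewrite /rainbow_triangle !cd //.
  rewrite (inner x y) // (inner y z) // (inner z x) //=; apply: contra.
  rewrite !inE !negb_or andbT.
  by case/andP => /andP [xy' xz'] yz'; rewrite yz' xy' (eq_sym (C z v)) xz'.
move=> p q Apq; rewrite mem_undup mem_cat.
have pq : p != q by apply: contraTneq Apq => ->; rewrite irr.
case: (eqVneq p v) pq => [-> | pv] pq.
  by rewrite map_f // -mem_others eq_sym.
case: (eqVneq q v) pq => [-> | qv] pq.
  by rewrite orbC map_f // -mem_others.
by rewrite inner // orbC map_f // -mem_others.
Qed.

Lemma K4_num_colors_le5 (V : finType) (A : rel V) (C : V -> V -> nat) (v : V) :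
  irreflexive A -> complete_digraph A -> #|V| = 4 -> no_rainbow_triangle A C ->
  3 <= ds A C v -> num_colors A C <= 5.
Proof.
move=> irr cd V4 nr big.
have cm : complete_minus A v by move=> x y _ _; apply: cd.
have ds_big : #|V|.-1 <= ds A C v by rewrite V4.
case: (Cs_CNin_or_CNout irr nr cm big) => free.
  have out_Cs q : q != v -> C v q \in Cs A C v.
    move=> qv; apply: (CNout_sub_Cs irr ds_big free).
    by apply/CNoutP; exists q; rewrite // cd // eq_sym.
  have rest_Cs p q : p != v -> p != q -> C p q \notin Cs A C v.
    move=> pv pq; case: (eqVneq q v) => [-> | qv].
      by apply: (hasPn free); apply/CNinP; exists p; rewrite // cd.
    exact: Cs_inner (cd p q pq) pv qv.
  have [s s5 As] := K4_arc_colors_five (P := fun c => c \in Cs A C v)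
    irr cd V4 nr out_Cs rest_Cs.
  exact: leq_trans (num_colors_le As) s5.
have in_Cs q : q != v -> C q v \in Cs A C v.
  move=> qv; apply: (CNin_sub_Cs irr ds_big free).
  by apply/CNinP; exists q; rewrite // cd.
have rest_Cs p q : p != v -> p != q -> C q p \notin Cs A C v.
  move=> pv pq; case: (eqVneq q v) => [-> | qv].
    by apply: (hasPn free); apply/CNoutP; exists p; rewrite // cd // eq_sym.
  by apply: Cs_inner (cd q p _) qv pv; rewrite eq_sym.
have cd_rev : complete_digraph (fun x y => A y x).
  by move=> x y xy; apply: cd; rewrite eq_sym.
have [s s5 As] := K4_arc_colors_five (A := fun x y => A y x)
  (C := fun x y => C y x) (P := fun c => c \in Cs A C v) irr cd_rev V4
  (no_rainbow_triangle_rev nr) in_Cs rest_Cs.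
exact: leq_trans (num_colors_le (fun p q Apq => As q p Apq)) s5.
Qed.

Theorem lemma1 (V : finType) (A : rel V) (C : V -> V -> nat) (v : V) :
  irreflexive A ->
  4 <= #|V| ->
  no_rainbow_triangle A C ->
  complete_minus A v ->
  3 <= ds A C v ->
  ((~~ has (fun c => c \in Cs A C v) (CNin A C v)) \/
   (~~ has (fun c => c \in Cs A C v) (CNout A C v))) /\
  (complete_digraph A -> #|V| = 4 -> num_colors A C <= 5).
Proof.
move=> irr _ nr cm big; split; first exact: Cs_CNin_or_CNout.
by move=> cd V4; apply: K4_num_colors_le5 big.
Qed.
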